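(* Let $X$ and $Y$ be non-negative absolutely continuous random variables with PDFs $f$ and $g$. Let $r>0$, $r\ne1$, $0<\alpha<\infty$, $\alpha\ne1$, $\beta>0$. Let $Y_{E,r}$ be the generalized escort random variable with PDF $\frac{f^r(x)g^{1-r}(x)}{\int_0^\infty f^r(t)g^{1-r}(t)\,dt}$, $x>0$, and let $X_{e,\alpha}$, $Y_{e,\alpha}$ be the escort random variables with PDFs $\frac{f^\alpha(x)}{\int_0^\infty f^\alpha(t)dt}$ and $\frac{g^\alpha(x)}{\int_0^\infty g^\alpha(t)dt}$, respectively. Then $$R^\alpha_\beta(Y_{E,r})\,RD^r_{\alpha\beta-\alpha+1}(X,Y)=(1-\alpha)\,R^\alpha_{r\beta-r+1}(X)\,R^\alpha_{(1-r)(\beta-1)+1}(Y)\,RD^r_\beta(X_{e,\alpha},Y_{e,\alpha}).$$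
   Context: For a non-negative absolutely continuous random variable $Z$ with PDF $h$, the Rényi information generating function is $R^a_b(Z)=\frac{1}{1-a}\left(\int_0^\infty h^a(x)\,dx\right)^{b-1}$ ($a>0$, $a\ne1$, $b>0$). For non-negative absolutely continuous random variables $U,V$ with PDFs $u,v$, the Rényi divergence information generating function is $RD^a_b(U,V)=\frac{1}{a-1}\left(\int_0^\infty u^a(x)v^{1-a}(x)\,dx\right)^{b-1}$ ($a>0$, $a\ne1$, $b>0$). All integrals are assumed to exist, be finite and positive. *)

From HB Require Import structures.
From mathcomp Require Import all_boot all_order all_algebra.
From mathcomp Require Import all_classical all_reals all_analysis.
Set Implicit Arguments. Unset Strict Implicit. Unset Printing Implicit Defensive.
Import Order.TTheory GRing.Theory Num.Theory.
Local Open Scope classical_set_scope.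
Local Open Scope ring_scope.

Section Defs.
Variable R : realType.

Definition pos_half : set R := `]0, +oo[%classic.

Definition int0oo (h : R -> R) : R := Rintegral lebesgue_measure pos_half h.

Definition intble0oo (h : R -> R) : Prop :=
  lebesgue_measure.-integrable pos_half (EFin \o h).

Definition renyi_igf (a b : R) (h : R -> R) : R :=
  (1 - a)^-1 * (int0oo (fun x => h x `^ a)) `^ (b - 1).

Definition renyi_div_igf (a b : R) (u v : R -> R) : R :=
  (a - 1)^-1 * (int0oo (fun x => u x `^ a * v x `^ (1 - a))) `^ (b - 1).

Definition escort (a : R) (f : R -> R) : R -> R :=
  fun x => f x `^ a / int0oo (fun t => f t `^ a).

Definition gen_escort (r : R) (f g : R -> R) : R -> R :=
  fun x => f x `^ r * g x `^ (1 - r) / int0oo (fun t => f t `^ r * g t `^ (1 - r)).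

Definition is_pdf0 (h : R -> R) : Prop :=
  (forall x, 0 < x -> 0 <= h x) /\ intble0oo h /\ int0oo h = 1.

Definition good_int (h : R -> R) : Prop := intble0oo h /\ 0 < int0oo h.

End Defs.

From mathcomp Require Import all_boot all_order all_algebra.
From mathcomp Require Import all_classical all_reals all_analysis.
From mathcomp Require Import ring.
Import Order.TTheory GRing.Theory Num.Theory.
Local Open Scope ring_scope.

(* Write I = int f^r g^(1-r), A = int f^alpha and B = int g^alpha.  Pointwise,
   (f^alpha/A)^r (g^alpha/B)^(1-r) = (f^r g^(1-r)/I)^alpha * I^alpha/(A^r B^(1-r)),
   so the divergence integral of the two escorts is the integral K of the
   alpha-th power of the generalized escort, times the constant
   I^alpha/(A^r B^(1-r)).  Raising K * I^alpha/(A^r B^(1-r)) to the power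
   beta - 1 splits it into the four information generating functions of the
   identity, whose exponents match after the prefactors 1/(1-alpha) and
   1/(r-1) are accounted for. *)

Lemma powR_div (R : realType) (x y p : R) : 0 <= x -> 0 <= y ->
  (x / y) `^ p = x `^ p / y `^ p.
Proof.
move=> x0 y0; rewrite powRM ?invr_ge0 //.
by rewrite -powR_inv1 // -powRrM mulN1r powRN.
Qed.

Lemma powR_mul_ratio (R : realType) (K I A B a r s p : R) : 0 <= K ->
  (K * (I `^ a / (A `^ r * B `^ s))) `^ p =
  K `^ p * I `^ (a * p) / (A `^ (r * p) * B `^ (s * p)).
Proof.
move=> K0.
rewrite powRM ?divr_ge0 ?mulr_ge0 ?powR_ge0 // powR_div ?mulr_ge0 ?powR_ge0 //.
by rewrite powRM ?powR_ge0 // -!powRrM mulrA.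
Qed.

Lemma escort_mix_powR (R : realType) (u v I A B a r : R) :
  0 <= u -> 0 <= v -> 0 < I -> 0 < A -> 0 < B ->
  (u `^ a / A) `^ r * (v `^ a / B) `^ (1 - r) =
  (u `^ r * v `^ (1 - r) / I) `^ a * (I `^ a / (A `^ r * B `^ (1 - r))).
Proof.
move=> u0 v0 I0 A0 B0.
rewrite !powR_div ?powR_ge0 ?mulr_ge0 ?powR_ge0 ?ltW // powRM ?powR_ge0 //.
rewrite (powRAC u a r) (powRAC v a (1 - r)).
have IaN0 : I `^ a != 0 by rewrite gt_eqF // powR_gt0.
have ArN0 : A `^ r != 0 by rewrite gt_eqF // powR_gt0.
have BrN0 : B `^ (1 - r) != 0 by rewrite gt_eqF // powR_gt0.
by field; rewrite IaN0 ArN0 BrN0.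
Qed.

Lemma int0oo_escort_mix (R : realType) (f g : R -> R) (a r : R) :
  (forall x, 0 < x -> 0 <= f x) -> (forall x, 0 < x -> 0 <= g x) ->
  0 < int0oo (fun x => f x `^ r * g x `^ (1 - r)) ->
  0 < int0oo (fun x => f x `^ a) -> 0 < int0oo (fun x => g x `^ a) ->
  intble0oo (fun x => gen_escort r f g x `^ a) ->
  int0oo (fun x => escort a f x `^ r * escort a g x `^ (1 - r)) =
  int0oo (fun x => gen_escort r f g x `^ a) *
    (int0oo (fun x => f x `^ r * g x `^ (1 - r)) `^ a /
     (int0oo (fun x => f x `^ a) `^ r * int0oo (fun x => g x `^ a) `^ (1 - r))).
Proof.
move=> f0 g0 I0 A0 B0 intK.
rewrite /int0oo -RintegralZr //; last exact: measurable_itv.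
apply: eq_Rintegral => x; rewrite inE /pos_half /= in_itv /= andbT => x0.
by apply: escort_mix_powR => //; [exact: f0 | exact: g0].
Qed.

Theorem proposition3p2 (R : realType) (f g : R -> R) (r alpha beta : R) :
  is_pdf0 f -> is_pdf0 g ->
  0 < r -> r != 1 -> 0 < alpha -> alpha != 1 -> 0 < beta ->
  (* all integrals appearing below exist, are finite and positive *)
  good_int (fun x => f x `^ r * g x `^ (1 - r)) ->
  good_int (fun x => gen_escort r f g x `^ alpha) ->
  good_int (fun x => f x `^ alpha) ->
  good_int (fun x => g x `^ alpha) ->
  good_int (fun x => escort alpha f x `^ r * escort alpha g x `^ (1 - r)) ->
  renyi_igf alpha beta (gen_escort r f g) *
    renyi_div_igf r (alpha * beta - alpha + 1) f g =
  (1 - alpha) * renyi_igf alpha (r * beta - r + 1) f *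
    renyi_igf alpha ((1 - r) * (beta - 1) + 1) g *
    renyi_div_igf r beta (escort alpha f) (escort alpha g).
Proof.
move=> [f0 _] [g0 _] _ r1 _ a1 _ [_ I0] [intK K0] [_ A0] [_ B0] _.
rewrite /renyi_igf /renyi_div_igf int0oo_escort_mix // powR_mul_ratio ?ltW //.
set K := int0oo _ in K0 *; set I := int0oo _ in I0 *.
set A := int0oo _ in A0 *; set B := int0oo _ in B0 *.
have -> : alpha * beta - alpha + 1 - 1 = alpha * (beta - 1) by ring.
have -> : r * beta - r + 1 - 1 = r * (beta - 1) by ring.
have -> : (1 - r) * (beta - 1) + 1 - 1 = (1 - r) * (beta - 1) by ring.
have aN1 : 1 - alpha != 0 by rewrite subr_eq0 eq_sym.
have rN1 : r - 1 != 0 by rewrite subr_eq0.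
have ArN0 : A `^ (r * (beta - 1)) != 0 by rewrite gt_eqF // powR_gt0.
have BrN0 : B `^ ((1 - r) * (beta - 1)) != 0 by rewrite gt_eqF // powR_gt0.
move: (K `^ _) (I `^ _) ArN0 BrN0 => Kp Ip.
move: (A `^ _) (B `^ _) => Ap Bp ApN0 BpN0.
by field; rewrite aN1 rN1 ApN0 BpN0.
Qed.
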